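(* Let $G$ be a finite group with an endomorphism having the linear identity $-n+m\cdot t\in\mathbb{Z}[t]$, where $m,n$ are integers with $m\cdot n\cdot(m-n)\ne0$. Then either $G$ has $(m\cdot n\cdot(m-n))$-torsion, or $G$ is abelian.
   Context: For an endomorphism $\gamma$ and $s(t)=b_0+\cdots+b_et^e\in\mathbb{Z}[t]$, $x^{s(\gamma)}:=x^{b_0}\gamma(x^{b_1})\cdots\gamma^e(x^{b_e})$; $r(t)$ is an identity of $\gamma$ if there is a decomposition $r=r_1+\cdots+r_k$ in $\mathbb{Z}[t]$ with $x^{r_1(\gamma)}\cdots x^{r_k(\gamma)}=1_G$ for all $x\in G$ (the identity need not be monic or of the single-term form). $G$ has $N$-torsion if some $h\ne1_G$ satisfies $h^N=1_G$. *)

From HB Require Import structures.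
From mathcomp Require Import all_boot all_order all_algebra all_fingroup.
Set Implicit Arguments. Unset Strict Implicit. Unset Printing Implicit Defensive.
Import GRing.Theory.

Definition gzexp (gT : finGroupType) (x : gT) (z : int) : gT :=
  match z with
  | Posz n => (x ^+ n)%g
  | Negz n => (x ^- n.+1)%g
  end.

(* x^{s(gamma)} := x^{b_0} gamma(x^{b_1}) ... gamma^e(x^{b_e}),
   for s = b_0 + b_1 t + ... + b_e t^e. *)
Definition polyact (gT : finGroupType) (gamma : gT -> gT) (s : {poly int}) (x : gT)
  : gT :=
  \big[mulg/1%g]_(i < size s) iter i gamma (gzexp x s`_i).

Definition is_identity (gT : finGroupType) (gamma : gT -> gT) (r : {poly int}) : Prop :=
  exists rs : seq {poly int},
    (\sum_(ri <- rs) ri)%R = r /\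
    forall x : gT, \big[mulg/1%g]_(ri <- rs) polyact gamma ri x = 1%g.

Definition has_torsion (gT : finGroupType) (N : int) : Prop :=
  exists h : gT, h <> 1%g /\ gzexp h N = 1%g.

From HB Require Import structures.
From mathcomp Require Import all_boot all_order all_algebra all_fingroup.
From mathcomp Require Import all_solvable.
From mathcomp Require Import ring.
Import GRing.Theory.

Set Implicit Arguments. Unset Strict Implicit. Unset Printing Implicit Defensive.

(* Let k be an integer with k m = n modulo |G|. If |G| is prime to m n (m - n),
   then k and k - 1 are prime to |G|, and the identity says that gamma acts as
   x |-> x^k on every abelian image of a gamma-orbit. Every gamma-stable
   subgroup G is then abelian, by induction on |G|. If G^`(1) < G, then G^`(1)
   is abelian and central in G, so each G^`(1)<x> is abelian and stable; hence
   gamma x = x^k on G, and a k-th power endomorphism with k and k - 1 prime to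
   |G| forces G to be abelian. If G is perfect and nontrivial, gamma has no
   fixed points, so the Lang map h |-> h^-1 gamma(h) is onto every stable
   subgroup; this yields a stable Sylow subgroup P, abelian by induction, with
   N_G(P) centralising P, and Burnside's transfer argument gives
   P = P :&: G^`(1) = 1, a contradiction. *)


Section CoprimePowers.
Local Open Scope group_scope.
Variable gT : finGroupType.
Implicit Types (x y : gT) (G : {group gT}).

Lemma mem_cycleX_coprime x j : coprime #[x] j -> x \in <[x ^+ j]>.
Proof. by rewrite -generator_coprime => /eqP <-; apply: cycle_id. Qed.

Lemma expg_coprime_eq1 x j : coprime #[x] j -> x ^+ j = 1 -> x = 1.
Proof. by move=> /mem_cycleX_coprime + xj1; rewrite xj1 cycle1 => /set1P. Qed.

Lemma commute_coprime_expg x y i j : coprime #[x] i -> coprime #[y] j ->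
  commute (x ^+ i) (y ^+ j) -> commute x y.
Proof.
move=> coxi coyj cxy.
have /cycleP[a ->] := mem_cycleX_coprime coxi.
have /cycleP[b ->] := mem_cycleX_coprime coyj.
exact: commuteX2.
Qed.

Lemma coprime_order_card G x j : x \in G -> coprime j #|G| -> coprime #[x] j.
Proof. by move=> Gx coGj; rewrite coprime_sym (coprime_dvdr (order_dvdG Gx)). Qed.

(* (x y)^k = x^k y^k forces x^(k-1) to commute with y^k. *)
Lemma abelian_expg_morph G k :
  {in G &, {morph (expgn^~ k) : x y / x * y}} ->
  coprime k #|G| -> coprime k.-1 #|G| -> abelian G.
Proof.
case: k => [|k] expM coGk coGk1.
  by move: coGk; rewrite /coprime gcd0n => /eqP/card1_trivg->; apply: abelian1.
apply/centsP=> x Gx y Gy.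
have yx_k : (y * x) ^+ k.+1 = x ^+ k * y ^+ k.+1 * x.
  have -> : y * x = (x * y) ^ x by rewrite conjgE mulgA mulKg.
  by rewrite -conjXg expM // conjgE expgS -!mulgA mulKg.
have : x ^+ k * y ^+ k.+1 * x = y ^+ k.+1 * x ^+ k * x.
  by rewrite -yx_k expM // -mulgA -expgSr.
move/mulIg=> comm_yx.
exact: commute_coprime_expg (coprime_order_card Gx coGk1) (coprime_order_card Gy coGk)
  comm_yx.
Qed.

End CoprimePowers.

Section BurnsideTransfer.
Local Open Scope group_scope.
Variables (gT : finGroupType) (p : nat) (G P : {group gT}).
Hypotheses (sylP : p.-Sylow(G) P) (abP : abelian P) (nPcP : 'N_G(P) \subset 'C(P)).

(* Burnside's fusion argument: P and P^z are Sylow subgroups of the centraliser of a^z. *)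
Lemma Sylow_abelian_fusion a z : z \in G -> a \in P -> a ^ z \in P -> a ^ z = a.
Proof.
move=> Gz Pa Paz; set b := a ^ z.
have sPG := pHall_sub sylP.
have sCG : 'C_G[b] \subset G := subsetIl _ _.
have sPC : P \subset 'C_G[b] by rewrite subsetI sPG sub_cent1 (subsetP abP).
have sPzC : P :^ z \subset 'C_G[b].
  rewrite subsetI conj_subG //= sub_cent1.
  have abPz : abelian (P :^ z) by rewrite abelianJ.
  by apply: (subsetP abPz); rewrite memJ_conjg.
have sylP_C := pHall_subl sPC sCG sylP.
have sylPz_C : p.-Sylow('C_G[b]) (P :^ z)%G.
  by apply: pHall_subl sPzC sCG _; rewrite pHallJ.
have [c /setIP[Gc cbc] defPz] := Sylow_trans sylP_C sylPz_C.
have NPzc : z * c^-1 \in 'N_G(P).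
  rewrite inE groupM ?groupV //=; apply/normP.
  by rewrite conjsgM -/(gval (P :^ z)%G) defPz /= conjsgK.
have a_zc : a ^ (z * c^-1) = a.
  by apply/conjg_fixP/commgP/commute_sym; apply: (centP (subsetP nPcP _ NPzc)).
have cbc' : commute b c^-1 by apply: commute_sym; apply/cent1P; rewrite groupV.
by rewrite -a_zc conjgM -/b; apply/esym/conjg_fixP/commgP.
Qed.

(* The transfer into P kills G^`(1) and, by fusion, maps g in P to g ^+ #|G : P|. *)
Lemma Burnside_Sylow_der1 : P :&: G^`(1) = 1.
Proof.
have sPG := pHall_sub sylP.
have abA : abelian (idm P @* P) by rewrite morphim_idm.
pose V := transfer_morphism G abA.
have V_der1 : V @* G^`(1) = 1.
  have abV : abelian (V @* G) by apply/centsP=> x _ y _; apply: addrC.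
  by rewrite morphim_der // (derG1P abV).
apply/trivgP/subsetP=> g /setIP[Pg G'g].
have Gg := subsetP sPG g Pg.
have Vg : transfer G abA g = 0%R.
  have : V g \in V @* G^`(1) := mem_morphim V (subsetP (der_sub 1 G) g G'g) G'g.
  by rewrite V_der1 => /set1P.
set X := transversal (rcosets P G :* <[g]>) G.
have trX := transversalP (rcosets_cycle_partition sPG Gg).
rewrite (transfer_cycle_expansion sPG abA Gg trX) in Vg.
have fixX x : x \in X ->
    (g ^+ #|<[g]> : P :* x|) ^ x^-1 = g ^+ #|<[g]> : P :* x|.
  move=> Xx; have Gx := subsetP (transversal_sub trX) x Xx.
  apply: Sylow_abelian_fusion; rewrite ?groupV ?groupX //.
  by have := mulg_exp_card_rcosets P g x; rewrite mem_rcoset conjgE invgK mulgA.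
have gA : g \in idm P @* P := mem_morphim (idm_morphism P) Pg Pg.
rewrite (eq_bigr (fun x => (FiniteModule.fmod abA g *+ #|<[g]> : P :* x|)%R)) in Vg;
  last by move=> x Xx; rewrite /restrm /= fixX // /idm FiniteModule.fmodX.
rewrite sumrMnr (sum_index_rcosets_cycle sPG Gg trX) in Vg.
have g_index : g ^+ #|G : P| = 1.
  rewrite -(FiniteModule.fmodK abA (groupX _ gA)) FiniteModule.fmodX // Vg.
  exact: FiniteModule.fmval0.
apply/set1P/(expg_coprime_eq1 _ g_index).
by case/and3P: sylP => _ pP p'i; apply: pnat_coprime (mem_p_elt pP Pg) p'i.
Qed.

End BurnsideTransfer.

Section ZmodCancel.
Local Open Scope ring_scope.

Lemma mulrz_coprime_cancel (V : zmodType) (v w : V) (e : nat) (m n : int) (k : nat) :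
  v *+ e = 0 -> w *+ e = 0 -> coprimez m e -> (k%:Z * m = n %[mod e])%Z ->
  v *~ m = w *~ n -> v = w *+ k.
Proof.
move=> ve0 we0 /coprimezP[[u u'] /= Bezout] /eqP; rewrite eq_sym eqz_mod_dvd.
case/dvdzP=> c n_km vm_wn.
set z := v - w *+ k.
have ze0 : z *~ e = 0 by rewrite -pmulrn mulrnBl ve0 mulrnAC we0 mul0rn subrr.
have zm0 : z *~ m = 0.
  rewrite mulrzBl vm_wn pmulrn -mulrzA -mulrzBr n_km mulrC mulrzA -pmulrn.
  by rewrite we0 mul0rz.
apply/eqP; rewrite -subr_eq0 -/z -[z]mulr1z -Bezout mulrzDr -!mulrzA_C zm0 ze0.
by rewrite !mul0rz addr0.
Qed.

End ZmodCancel.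

Section IntegerPowers.
Local Open Scope group_scope.

Lemma group_gzexp (gT : finGroupType) (A : {group gT}) x z : x \in A -> gzexp x z \in A.
Proof. by move=> Ax; case: z => n /=; rewrite ?groupV groupX. Qed.

Lemma morph_gzexp (aT rT : finGroupType) (D : {group aT}) (f : {morphism D >-> rT}) x z :
  x \in D -> f (gzexp x z) = gzexp (f x) z.
Proof. by move=> Dx; case: z => n /=; rewrite ?morphV ?groupX // morphX. Qed.

Lemma fmod_gzexp (gT : finGroupType) (A : {group gT}) (abA : abelian A) x z :
  x \in A -> FiniteModule.fmod abA (gzexp x z) = (FiniteModule.fmod abA x *~ z)%R.
Proof. by move=> Ax; case: z => n /=; rewrite ?FiniteModule.fmodV FiniteModule.fmodX. Qed.

Lemma fmod_prod (gT : finGroupType) (A : {group gT}) (abA : abelian A) I (r : seq I)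
    (P : pred I) (F : I -> gT) :
  (forall i, P i -> F i \in A) ->
  FiniteModule.fmod abA (\prod_(i <- r | P i) F i) =
    (\sum_(i <- r | P i) FiniteModule.fmod abA (F i))%R.
Proof.
move=> AF; elim: r => [|i r IHr]; first by rewrite !big_nil FiniteModule.fmod1.
by rewrite !big_cons; case: ifP => Pi //; rewrite FiniteModule.fmodM ?AF ?group_prod // IHr.
Qed.

Lemma commute_gzexp_cancel (gT : finGroupType) (a b : gT) (e : nat) (m n : int) (k : nat) :
  commute a b -> a ^+ e = 1 -> b ^+ e = 1 -> coprimez m e ->
  (k%:Z * m = n %[mod e])%Z -> gzexp a m = gzexp b n -> a = b ^+ k.
Proof.
move=> cab ae1 be1 co_me km_n am_bn.
have abA : abelian <<[set a; b]>>.
  by rewrite abelian_gen; apply/centsP=> x /set2P[]-> y /set2P[]->; rewrite // commute_sym.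
have Aa : a \in <<[set a; b]>> by rewrite mem_gen ?set21.
have Ab : b \in <<[set a; b]>> by rewrite mem_gen ?set22.
have fmod_e x : x \in <<[set a; b]>> -> x ^+ e = 1 -> (FiniteModule.fmod abA x *+ e = 0)%R.
  by move=> Ax xe1; rewrite -FiniteModule.fmodX // xe1 FiniteModule.fmod1.
rewrite -(FiniteModule.fmodK abA Aa) -(FiniteModule.fmodK abA (groupX k Ab)).
rewrite FiniteModule.fmodX //; congr val.
apply: (mulrz_coprime_cancel (fmod_e _ Aa ae1) (fmod_e _ Ab be1) co_me km_n).
by rewrite -!fmod_gzexp // am_bn.
Qed.

Lemma iter_gzexp (gT : finGroupType) (gamma : gT -> gT) i x z :
  {morph gamma : y y' / y * y'} ->
  iter i gamma (gzexp x z) = gzexp (iter i gamma x) z.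
Proof.
move=> gammaM; pose gm : {morphism [set: gT] >-> gT} := Morphism (in2W gammaM).
by elim: i => //= i ->; apply: (morph_gzexp gm z (in_setT _)).
Qed.

Lemma polyactE (gT : finGroupType) (gamma : gT -> gT) (s : {poly int}) x N :
  {morph gamma : y y' / y * y'} -> (size s <= N)%N ->
  polyact gamma s x = \prod_(i < N) gzexp (iter i gamma x) s`_i.
Proof.
move=> gammaM le_s_N; rewrite /polyact.
rewrite (big_ord_widen N (fun i => iter i gamma (gzexp x s`_i)) le_s_N) big_mkcond /=.
apply: eq_bigr => i _; rewrite iter_gzexp //; case: ifP => // /negbT.
by rewrite -leqNgt => le_s_i; rewrite nth_default.
Qed.

End IntegerPowers.

Definition power_on_abelian_images (gT : finGroupType) (gamma : gT -> gT) (k : nat) :=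
  forall (rT : finGroupType) (D : {group gT}) (f : {morphism D >-> rT}) (x : gT),
    (forall i, iter i gamma x \in D) ->
    (forall i j, commute (f (iter i gamma x)) (f (iter j gamma x))) ->
    f (gamma x) = (f x ^+ k)%g.

Section LinearIdentity.
Local Open Scope group_scope.
Variables (gT : finGroupType) (gamma : gT -> gT) (m n : int).
Hypotheses (gammaM : {morph gamma : x y / x * y})
  (id_mn : is_identity gamma (m *: 'X - n%:P)%R).

Lemma linear_identity_on_abelian_images (rT : finGroupType) (D : {group gT})
    (f : {morphism D >-> rT}) x :
  (forall i, iter i gamma x \in D) ->
  (forall i j, commute (f (iter i gamma x)) (f (iter j gamma x))) ->
  gzexp (f (gamma x)) m = gzexp (f x) n.
Proof.
move=> orbitD orbitC; case: id_mn => rs [sum_rs prod_rs].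
pose N := (\max_(r <- rs) size r).+2.
have size_rs r : r \in rs -> (size r <= N)%N.
  by move=> rs_r; rewrite !leqW // (leq_bigmax_seq _ rs_r).
pose a i := f (iter i gamma x).
pose A := <<[set a (val i) | i : 'I_N]>>%G.
have abA : abelian A.
  rewrite abelian_gen; apply/centsP=> _ /imsetP[i _ ->] _ /imsetP[j _ ->].
  exact: orbitC.
have Aa i : (i < N)%N -> a i \in A.
  by move=> lt_iN; rewrite mem_gen //; apply/imsetP; exists (Ordinal lt_iN).
pose w i := FiniteModule.fmod abA (a i).
have polyact_D (r : {poly int}) : polyact gamma r x \in D.
  rewrite (polyactE x gammaM (leqnn _)) group_prod // => i _.
  exact: group_gzexp.
have f_polyact (r : {poly int}) : (size r <= N)%N ->
    f (polyact gamma r x) = \prod_(i < N) gzexp (a i) r`_i%R.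
  move=> le_rN; rewrite (polyactE x gammaM le_rN) morph_prod => [|i _].
    by apply: eq_bigr => i _; apply: morph_gzexp.
  exact: group_gzexp.
have A_polyact (r : {poly int}) : r \in rs -> f (polyact gamma r x) \in A.
  move=> rs_r; rewrite f_polyact ?size_rs // group_prod // => i _.
  exact/group_gzexp/Aa.
have fmod_polyact (r : {poly int}) : r \in rs ->
    FiniteModule.fmod abA (f (polyact gamma r x)) = (\sum_(i < N) w i *~ r`_i)%R.
  move=> rs_r; rewrite f_polyact ?size_rs // fmod_prod => [|i _]; last exact/group_gzexp/Aa.
  by apply: eq_bigr => i _; rewrite fmod_gzexp ?Aa.
have sum0 : (\sum_(r <- rs) \sum_(i < N) w i *~ r`_i = 0)%R.
  rewrite -(eq_big_seq _ fmod_polyact).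
  transitivity (FiniteModule.fmod abA (f (\prod_(r <- rs) polyact gamma r x))); last first.
    by rewrite prod_rs morph1 FiniteModule.fmod1.
  rewrite morph_prod // [X in FiniteModule.fmod _ X]big_seq fmod_prod => [|r].
    by rewrite -big_seq.
  exact: A_polyact.
have : (\sum_(i < N) w i *~ (m *: 'X - n%:P)`_i = 0)%R.
  apply: etrans sum0; rewrite exchange_big; apply: eq_bigr => i _.
  by rewrite -sum_rs coef_sum mulrz_sumr.
rewrite /N !big_ord_recl [X in (_ + (_ + X))%R]big1 => [|i _]; last first.
  by rewrite coefB coefZ coefX coefC /= mulr0 subr0 mulr0z.
rewrite !coefB !coefZ !coefX !coefC /= mulr0 mulr1 sub0r subr0 addr0 mulrNz.
move/eqP; rewrite addrC subr_eq0 => /eqP wm_wn.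
have [A0 A1] : a 0%N \in A /\ a 1%N \in A by split; apply: Aa.
apply: (can_in_inj (FiniteModule.fmodK abA)); rewrite ?group_gzexp //.
by rewrite !fmod_gzexp.
Qed.

Lemma power_on_abelian_images_of_identity k :
  coprimez m #|gT| -> (k%:Z * m = n %[mod #|gT|])%Z ->
  power_on_abelian_images gamma k.
Proof.
move=> co_m km_n rT D f x orbitD orbitC.
have f_card i : f (iter i gamma x) ^+ #|gT| = 1.
  by rewrite -morphX // -cardsT expg_cardG ?inE // morph1.
apply: (commute_gzexp_cancel (orbitC 1%N 0%N) (f_card 1%N) (f_card 0%N) co_m km_n).
exact: linear_identity_on_abelian_images.
Qed.

End LinearIdentity.

Section FixedPointFree.
Local Open Scope group_scope.
Variables (gT : finGroupType) (gamma : gT -> gT).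
Hypotheses (gammaM : {morph gamma : x y / x * y}) (gamma_inj : injective gamma)
  (gamma_fpf : forall x, gamma x = x -> x = 1).
Let gm : {morphism [set: gT] >-> gT} := Morphism (in2W gammaM).
Let gammaV x : gamma x^-1 = (gamma x)^-1. Proof. exact: (morphV gm (in_setT x)). Qed.
Let gammaJ x y : gamma (x ^ y) = gamma x ^ gamma y.
Proof. exact: (morphJ gm (in_setT x) (in_setT y)). Qed.

Let card_morphim (A : {set gT}) : #|gm @* A| = #|A|.
Proof. by rewrite morphimE setTI card_in_imset // => x y _ _; apply: gamma_inj. Qed.

Lemma stable_morphim (A : {group gT}) : {homo gamma : x / x \in A} -> gm @* A = A.
Proof.
move=> sA; apply/eqP; rewrite eqEcard card_morphim leqnn andbT.
by apply/subsetP=> _ /morphimP[x _ Ax ->]; apply: sA.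
Qed.

Lemma twisted_conj_surj (A : {group gT}) g : {homo gamma : x / x \in A} -> g \in A ->
  exists2 h, h \in A & g = h^-1 * gamma h.
Proof.
move=> sA Ag.
have inj_tw : injective (fun h => h^-1 * gamma h).
  move=> a b /= eq_ab; apply/esym/eqP; rewrite eq_mulgV1; apply/eqP/gamma_fpf.
  have gb : gamma b = b * a^-1 * gamma a by rewrite -mulgA eq_ab mulKVg.
  by rewrite gammaM gammaV gb mulgK.
have sTA : [set h^-1 * gamma h | h in A] \subset A.
  by apply/subsetP=> _ /imsetP[h Ah ->]; rewrite groupM ?groupV ?sA.
have : [set h^-1 * gamma h | h in A] == A.
  by rewrite eqEcard sTA (card_imset _ inj_tw) leqnn.
by move/eqP=> defA; move: Ag; rewrite -{1}defA => /imsetP[h Ah ->]; exists h.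
Qed.

Lemma stable_Sylow_exists p (G : {group gT}) : {homo gamma : x / x \in G} ->
  exists2 P : {group gT}, p.-Sylow(G) P & {homo gamma : x / x \in P}.
Proof.
move=> sG; have [P0 sylP0] := Sylow_exists p G.
have sylP0g : p.-Sylow(G) (gm @* P0).
  rewrite pHallE (subset_trans (morphimS gm (pHall_sub sylP0))) ?stable_morphim //=.
  by rewrite card_morphim (card_Hall sylP0).
have [g Gg defP0g] := Sylow_trans sylP0 sylP0g.
have [a Ga def_g] := twisted_conj_surj sG Gg.
exists (P0 :^ a^-1)%G; first by rewrite pHallJ ?groupV.
have defP : gm @* (P0 :^ a^-1) = P0 :^ a^-1.
  by rewrite morphimJ ?inE // defP0g -conjsgM /= gammaV def_g mulgK.
by move=> x Px; have := mem_morphim gm (in_setT x) Px; rewrite defP.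
Qed.

Lemma stable_normaliser_centralises (G P : {group gT}) k :
    {homo gamma : x / x \in G} -> {homo gamma : x / x \in P} ->
    {in P, forall a, gamma a = a ^+ k} -> coprime k #|P| ->
  'N_G(P) \subset 'C(P).
Proof.
move=> sG sP gammaP coPk.
have defP := stable_morphim sP.
have sN : {homo gamma : x / x \in 'N_G(P)}.
  move=> y /setIP[Gy Ny]; rewrite inE sG //=; apply/normP.
  by rewrite -{1}defP -[gamma y]/(gm y) -morphimJ ?inE // (normP Ny) defP.
have twist_cent y : y \in 'N_G(P) -> gamma y * y^-1 \in 'C(P).
  case/setIP=> _ Ny; apply/centP => a Pa.
  have Pay : a ^ y \in P by rewrite memJ_norm.
  have conj_ak := gammaP _ Pay.
  rewrite gammaJ gammaP // -conjXg in conj_ak.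
  have fix_ak : (a ^+ k) ^ (gamma y * y^-1) = a ^+ k.
    by rewrite conjgM conj_ak -conjgM mulgV conjg1.
  apply/commute_sym/(commute_coprime_expg (coprime_order_card Pa coPk) (coprimen1 _)).
  by rewrite expg1; apply/commgP/conjg_fixP.
apply/subsetP => z Nz; have [y Ny ->] := twisted_conj_surj sN Nz.
have Ny' : y \in 'N(P) by case/setIP: Ny.
have -> : y^-1 * gamma y = (gamma y * y^-1) ^ y by rewrite conjgE !mulgA mulgKV.
by rewrite -(normP Ny') centJ memJ_conjg twist_cent.
Qed.

End FixedPointFree.

Lemma iter_stable (T : Type) (f : T -> T) (A : {pred T}) x i :
  {homo f : y / y \in A} -> x \in A -> iter i f x \in A.
Proof. by move=> sA Ax; elim: i => //= i; apply: sA. Qed.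

Section PowerEndomorphism.
Local Open Scope group_scope.
Variables (gT : finGroupType) (gamma : gT -> gT) (k : nat).
Hypotheses (gammaM : {morph gamma : x y / x * y})
  (gamma_pow : power_on_abelian_images gamma k) (k_gt0 : 0 < k)
  (coprime_k : coprime k #|gT|) (coprime_k1 : coprime k.-1 #|gT|).
Let gm : {morphism [set: gT] >-> gT} := Morphism (in2W gammaM).

Let gammaV x : gamma x^-1 = (gamma x)^-1. Proof. exact: (morphV gm (in_setT x)). Qed.
Let gammaX x n : gamma (x ^+ n) = gamma x ^+ n.
Proof. exact: (morphX gm n (in_setT x)). Qed.
Let gammaJ x y : gamma (x ^ y) = gamma x ^ gamma y.
Proof. exact: (morphJ gm (in_setT x) (in_setT y)). Qed.

Let coprime_card (A : {group gT}) j : coprime j #|gT| -> coprime j #|A|.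
Proof. by apply: coprime_dvdr; rewrite -cardsT cardSg ?subsetT. Qed.

Let coprime_order (x : gT) j : coprime j #|gT| -> coprime #[x] j.
Proof. by move/(coprime_card [set: gT]); apply: coprime_order_card; rewrite inE. Qed.

Let stableP (A : {set gT}) : reflect {homo gamma : x / x \in A} (gm @* A \subset A).
Proof.
apply: (iffP subsetP) => sA x Ax; first exact: sA (mem_morphim gm (in_setT x) Ax).
by case/morphimP: Ax => y _ Ay ->; apply: sA.
Qed.

Lemma stable_abelian_power (A : {group gT}) :
  {homo gamma : x / x \in A} -> abelian A -> {in A, forall x, gamma x = x ^+ k}.
Proof.
move=> sA abA x Ax.
have := gamma_pow (f := idm_morphism [set: gT]) (fun i => in_setT (iter i gamma x)).
by apply=> i j; apply: (centsP abA); apply: iter_stable.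
Qed.

Lemma gamma_cycle x : gamma x \in <[x]> -> gamma x = x ^+ k.
Proof.
move=> gx; apply: (stable_abelian_power _ (cycle_abelian x) (cycle_id x)).
by move=> _ /cycleP[i ->]; rewrite gammaX groupX.
Qed.

Lemma gamma_injective : injective gamma.
Proof.
have ker1 g : gamma g = 1 -> g = 1.
  move=> g1; apply: (expg_coprime_eq1 (coprime_order g coprime_k)).
  by rewrite -gamma_cycle g1 ?group1.
move=> a b eq_ab; apply/eqP; rewrite eq_mulgV1; apply/eqP/ker1.
by rewrite gammaM gammaV eq_ab mulgV.
Qed.

Lemma gamma_fixed_point_free x : gamma x = x -> x = 1.
Proof.
move=> gx; have := @gamma_cycle x; rewrite gx => /(_ (cycle_id x)).
rewrite -(prednK k_gt0) expgSr -{1}(mul1g x) => /mulIg/esym.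
exact: expg_coprime_eq1 (coprime_order x coprime_k1).
Qed.

Lemma stable_der1 (G : {group gT}) :
  {homo gamma : x / x \in G} -> {homo gamma : x / x \in G^`(1)}.
Proof. by move/stableP=> sG; apply/stableP; rewrite morphim_der ?subsetT // dergS. Qed.

Lemma der1_power_coset (G : {group gT}) x : {homo gamma : y / y \in G} -> x \in G ->
  (x ^+ k)^-1 * gamma x \in G^`(1).
Proof.
move=> sG Gx; have nG'G : G \subset 'N(G^`(1)) := der_norm 1 G.
have orbitN i : iter i gamma x \in 'N(G^`(1)) := subsetP nG'G _ (iter_stable i sG Gx).
have abQ : abelian (G / G^`(1)) := sub_der1_abelian (subxx _).
have gx_coset : coset G^`(1) (gamma x) = coset G^`(1) x ^+ k.
  apply: (gamma_pow (f := coset_morphism G^`(1)) orbitN) => i j.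
  by apply: (centsP abQ); apply: mem_quotient; apply: iter_stable.
have Nx := subsetP nG'G _ Gx; have Ngx := subsetP nG'G _ (sG _ Gx).
apply: coset_idr; first by rewrite groupM ?groupV ?groupX.
by rewrite morphM ?groupV ?groupX // morphV ?groupX // morphX //= gx_coset mulVg.
Qed.

Lemma stable_der1_central (G : {group gT}) :
  {homo gamma : x / x \in G} -> abelian G^`(1) -> G \subset 'C(G^`(1)).
Proof.
move=> sG abG'; have powG' := stable_abelian_power (stable_der1 sG) abG'.
apply/subsetP=> x Gx; apply/centP=> a G'a.
have G'ax : a ^ x \in G^`(1) by rewrite memJ_norm ?(subsetP (der_norm 1 G)).
set c := (x ^+ k)^-1 * gamma x.
have G'c : c \in G^`(1) := der1_power_coset sG Gx.
have G'akxk : (a ^+ k) ^ (x ^+ k) \in G^`(1).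
  by rewrite memJ_norm ?groupX ?(subsetP (der_norm 1 G)).
have conj_k : (a ^+ k) ^ (x ^+ k) = (a ^+ k) ^ x.
  have := powG' _ G'ax; rewrite gammaJ powG' // -(mulKVg (x ^+ k) (gamma x)).
  rewrite -/c conjgM -conjXg => <-; apply/esym/conjg_fixP/commgP.
  exact: (centsP abG').
have : commute (a ^+ k) (x ^+ k.-1).
  apply/commgP/conjg_fixP/(@conjg_inj _ x).
  by rewrite -conjgM -expgSr prednK.
move/(commute_coprime_expg (coprime_order a coprime_k) (coprime_order x coprime_k1)).
exact: commute_sym.
Qed.

Lemma abelian_of_abelian_der1 (G : {group gT}) :
  {homo gamma : x / x \in G} -> abelian G^`(1) -> abelian G.
Proof.
move=> sG abG'; have cG'G := stable_der1_central sG abG'.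
have powG : {in G, forall x, gamma x = x ^+ k}.
  move=> x Gx; set L := (G^`(1) <*> <[x]>)%G.
  have sL : {homo gamma : y / y \in L}.
    apply/stableP; rewrite morphimY ?subsetT // join_subG.
    rewrite (subset_trans (introT (stableP _) (stable_der1 sG)) (joing_subl _ _)) /=.
    rewrite morphim_cycle ?inE // cycle_subG /= -(mulKVg (x ^+ k) (gamma x)).
    rewrite groupM ?groupX ?mem_gen ?inE ?cycle_id ?orbT //.
    by rewrite der1_power_coset.
  have abL : abelian L.
    by rewrite abelianY abG' cycle_abelian cycle_subG (subsetP cG'G).
  exact: (stable_abelian_power sL abL) (subsetP (joing_subr _ _) _ (cycle_id x)).
apply: abelian_expg_morph (coprime_card G coprime_k) (coprime_card G coprime_k1).
by move=> x y Gx Gy /=; rewrite -!powG ?groupM ?gammaM.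
Qed.

Lemma perfect_stable_trivial (G : {group gT}) : {homo gamma : x / x \in G} ->
    (forall H : {group gT}, H \proper G -> {homo gamma : x / x \in H} -> abelian H) ->
  G^`(1) = G -> G :=: 1.
Proof.
move=> sG IH perfG; apply/eqP; apply: contraT => ntG.
set p := pdiv #|G|.
have [P sylP sP] :=
  stable_Sylow_exists gammaM gamma_injective gamma_fixed_point_free p sG.
have P_gt1 : 1 < #|P| by rewrite (card_Hall sylP) p_part_gt1 pi_pdiv cardG_gt1.
have pPG : P \proper G.
  rewrite properEneq (pHall_sub sylP) andbT; apply/eqP => defP.
  have solG : solvable G by rewrite -defP (pgroup_sol (pHall_pgroup sylP)).
  by have := sol_der1_proper solG (subxx G) ntG; rewrite perfG properE subxx.
have abP := IH _ pPG sP.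
have nPcP := stable_normaliser_centralises gammaM gamma_injective
  gamma_fixed_point_free sG sP (stable_abelian_power sP abP) (coprime_card P coprime_k).
have := Burnside_Sylow_der1 sylP abP nPcP.
by rewrite perfG (setIidPl (pHall_sub sylP)) => P1; rewrite P1 cards1 in P_gt1.
Qed.

Lemma stable_abelian (G : {group gT}) : {homo gamma : x / x \in G} -> abelian G.
Proof.
elim: {G}_.+1 {-2}G (ltnSn #|G|) => // n IHn G leGn sG.
have IH (H : {group gT}) : H \proper G -> {homo gamma : x / x \in H} -> abelian H.
  by move=> pHG; apply: IHn; rewrite (leq_trans (proper_card pHG)).
have [perfG | ndG] := eqVneq G^`(1) G.
  by rewrite (perfect_stable_trivial sG IH perfG) abelian1.
apply: abelian_of_abelian_der1 sG (IH _ _ (stable_der1 sG)).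
by rewrite properEneq ndG der_sub.
Qed.

End PowerEndomorphism.

Section IntegerArithmetic.
Local Open Scope ring_scope.

Lemma coprimez_natr (m : int) (e : nat) : coprimez m e = coprime `|m| e.
Proof. exact: coprimezE. Qed.

Lemma coprimez_congr (a b e : int) : (a = b %[mod e])%Z -> coprimez a e = coprimez b e.
Proof. by move=> eq_ab; rewrite /coprimez -gcdz_modl eq_ab gcdz_modl. Qed.

(* Adding e keeps k positive, so that k.-1 is the integer k - 1 even when e = 1. *)
Lemma exists_power_exponent (e : nat) (m n : int) : (0 < e)%N ->
    coprimez m e -> coprimez n e -> coprimez (m - n) e ->
  exists k : nat,
    [/\ (0 < k)%N, (k%:Z * m = n %[mod e])%Z, coprime k e & coprime k.-1 e].
Proof.
move=> e_gt0 co_m co_n co_mn.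
have [[u v] /= Bezout] := coprimezP _ _ co_m.
have co_u : coprimez u e by apply/coprimezP; exists (m, v); rewrite /= mulrC.
have dvd_um : (e %| u * m - 1)%Z by apply/dvdzP; exists (- v); rewrite -Bezout; ring.
set r := ((n * u) %% e)%Z.
have r_ge0 : 0 <= r by rewrite modz_ge0 // eqz_nat -lt0n.
exists (`|r| + e)%N; set k := (`|r| + e)%N.
have k_gt0 : (0 < k)%N by rewrite addn_gt0 e_gt0 orbT.
have kE : k%:Z = r + e by rewrite PoszD gez0_abs.
have k_nu : (k%:Z = n * u %[mod e])%Z by rewrite kE modzDr modz_mod.
have dvd_k : (e %| k%:Z - n * u)%Z by rewrite -eqz_mod_dvd k_nu.
split=> //.
- apply/eqP; rewrite eqz_mod_dvd.
  have -> : k%:Z * m - n = (k%:Z - n * u) * m + n * (u * m - 1) by ring.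
  by apply: rpredD; [apply: dvdz_mulr | apply: dvdz_mull].
- by rewrite -(coprimez_natr k) (coprimez_congr k_nu) coprimezMl co_n.
have dvd_k1 : (e %| (k%:Z - 1) - (n - m) * u)%Z.
  have -> : (k%:Z - 1) - (n - m) * u = (k%:Z - n * u) + (u * m - 1) by ring.
  by rewrite rpredD.
rewrite -(coprimez_natr k.-1) predn_int //.
move: dvd_k1; rewrite -eqz_mod_dvd => /eqP/coprimez_congr ->.
by rewrite coprimezMl co_u andbT -opprB coprimez_sym coprimezN coprimez_sym.
Qed.

End IntegerArithmetic.

Lemma gzexp_eq1 (gT : finGroupType) (x : gT) (z : int) :
  (gzexp x z == 1)%g = (x ^+ `|z| == 1)%g.
Proof. by case: z => n //=; rewrite invg_eq1. Qed.

Lemma torsion_or_coprime_card (gT : finGroupType) (N : int) :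
  has_torsion gT N \/ coprime #|gT| `|N|.
Proof.
have [/existsP[h /andP[/eqP nt_h /eqP hN]] | no_tor] :=
  boolP [exists h : gT, (h != 1)%g && (gzexp h N == 1)%g].
  by left; exists h.
right; rewrite -cardsT /coprime eqn_leq gcdn_gt0 cardG_gt0 andbT leqNgt.
apply: contra no_tor => d_gt1; set d := gcdn _ _ in d_gt1.
have p_pr := pdiv_prime d_gt1; have p_d := pdiv_dvd d.
have [x _ ox] := Cauchy p_pr (dvdn_trans p_d (dvdn_gcdl _ _)).
apply/existsP; exists x; rewrite -order_gt1 ox prime_gt1 //= gzexp_eq1.
by rewrite -order_dvdn ox (dvdn_trans p_d (dvdn_gcdr _ _)).
Qed.

Theorem corollary7p3 (gT : finGroupType) (gamma : gT -> gT)
  (gamma_morph : {morph gamma : x y / (x * y)%g})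
  (m n : int) (hmn : (m * n * (m - n))%R <> 0%R)
  (hid : is_identity gamma (m *: 'X - n%:P)%R) :
  has_torsion gT (m * n * (m - n))%R \/ abelian [set: gT].
Proof.
have [|co_mn] := torsion_or_coprime_card gT (m * n * (m - n))%R; [by left | right].
rewrite !abszM !coprimeMr ![coprime #|gT| _]coprime_sym -!coprimez_natr in co_mn.
case/andP: co_mn => /andP[co_m co_n] co_mn.
have gT_gt0 : (0 < #|gT|)%N by rewrite -cardsT cardG_gt0.
have [k [k_gt0 km_n co_k co_k1]] := exists_power_exponent gT_gt0 co_m co_n co_mn.
have pow_k := power_on_abelian_images_of_identity gamma_morph hid co_m km_n.
exact: stable_abelian pow_k k_gt0 co_k co_k1 [set: gT]%G (fun x _ => in_setT _).
Qed.
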